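(* Let $G$ be a non-singular graph with $n$ vertices and adjacency matrix $A=(a_{ij})$. If $f:\mathcal{A}_{RW}(G)\to\mathcal{A}(G)$ is an algebra homomorphism, then either $f$ is the null map, or $f$ is an isomorphism given by $f(e_i)=\alpha_i e_{\pi(i)}$ for all $i\in V$, where $\alpha_i\neq0$ are scalars and $\pi$ is an element of the symmetric group $S_n$.
   Context: Graphs are simple (no loops or multiple edges) and connected; here $V=\{1,\dots,n\}$ is finite. The adjacency matrix is $A=(a_{ij})$ with $a_{ij}=1$ if $i,j$ are neighbors and $0$ otherwise; $G$ is non-singular if $\det A\ne0$. $\deg(i)$ is the number of neighbors of $i$. An evolution algebra over $\mathbb{R}$ is an algebra with a basis $\{e_i\}$ (natural basis) such that $e_i\cdot e_j=0$ for $i\ne j$ and $e_i\cdot e_i=\sum_k c_{ik}e_k$. $\mathcal{A}(G)$ has natural basis $\{e_i:i\in V\}$ with $e_i\cdot e_i=\sum_{k\in V}a_{ik}e_k$; $\mathcal{A}_{RW}(G)$ has natural basis $\{e_i:i\in V\}$ with $e_i\cdot e_i=\sum_{k\in V}\frac{a_{ik}}{\deg(i)}e_k$; in both, $e_i\cdot e_j=0$ for $i\ne j$. A homomorphism is a linear map $f$ with $f(u\cdot v)=f(u)\cdot f(v)$. *)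

From HB Require Import structures.
From mathcomp Require Import all_boot all_order all_algebra.
From mathcomp Require Import fingroup perm.
From mathcomp Require Import reals.
Set Implicit Arguments. Unset Strict Implicit. Unset Printing Implicit Defensive.
Import Order.TTheory GRing.Theory Num.Theory.
Local Open Scope ring_scope.

(* A simple graph on the vertex set V = 'I_n (= {0,...,n-1}, standing for
   {1,...,n}) is a symmetric irreflexive boolean relation [e]. *)
Definition simple_graph (n : nat) (e : rel 'I_n) : Prop :=
  (forall i j, e i j = e j i) /\ (forall i, ~~ e i i).

Definition connected_graph (n : nat) (e : rel 'I_n) : Prop :=
  forall i j, connect e i j.

Definition adjacency (R : realType) (n : nat) (e : rel 'I_n) : 'M[R]_n :=
  \matrix_(i, j) (e i j)%:R.

Definition nonsingular (R : realType) (n : nat) (e : rel 'I_n) : Prop :=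
  \det (adjacency R e) != 0.

Definition deg (n : nat) (e : rel 'I_n) (i : 'I_n) : nat := #|[set j | e i j]|.

(* Evolution algebra on R^n with natural basis e_i = delta_mx 0 i (row
   vectors) and structure matrix C: e_i * e_i = sum_k C i k e_k,
   e_i * e_j = 0 for i <> j. Bilinear extension:
   u * v = sum_i u_i v_i (e_i * e_i). *)
Definition basis_vec (R : realType) (n : nat) (i : 'I_n) : 'rV[R]_n :=
  delta_mx 0 i.

Definition evol_mul (R : realType) (n : nat) (C : 'M[R]_n)
  (u v : 'rV[R]_n) : 'rV[R]_n :=
  \sum_(i < n) (u 0 i * v 0 i) *: row i C.

Definition struct_A (R : realType) (n : nat) (e : rel 'I_n) : 'M[R]_n :=
  adjacency R e.

Definition struct_RW (R : realType) (n : nat) (e : rel 'I_n) : 'M[R]_n :=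
  \matrix_(i, k) ((e i k)%:R / (deg e i)%:R).

Definition evol_hom (R : realType) (n : nat) (C1 C2 : 'M[R]_n)
  (f : {linear 'rV[R]_n -> 'rV[R]_n}) : Prop :=
  forall u v, f (evol_mul C1 u v) = evol_mul C2 (f u) (f v).

(* Images of distinct basis vectors multiply to zero in A(G); since the
   structure matrix A is invertible, they have disjoint supports.  Squaring
   f(e_i) gives f(e_i)^2 = sum_k a_ik/deg(i) f(e_k), so by disjointness
   f(e_i) = 0 forces f(e_k) = 0 for every neighbour k, and connectedness
   spreads this to all vertices.  Otherwise the n nonzero vectors f(e_i) have
   pairwise disjoint supports in R^n, so each one is supported on a single
   coordinate pi(i), and pi is a permutation. *)

From HB Require Import structures.
From mathcomp Require Import all_boot all_order all_algebra.
From mathcomp Require Import fingroup perm.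
From mathcomp Require Import reals.
Set Implicit Arguments.
Unset Strict Implicit.
Unset Printing Implicit Defensive.
Import Order.TTheory GRing.Theory Num.Theory.
Local Open Scope ring_scope.

Section DisjointSupports.
Variables (F : fieldType) (n : nat).
Implicit Types (X : 'I_n -> 'rV[F]_n) (f : {linear 'rV[F]_n -> 'rV[F]_n}).

Definition disjoint_supports X :=
  forall i j m, i != j -> X i 0 m * X j 0 m = 0.

Lemma linear_rowE f u : f u = \sum_i u 0 i *: f 'e_i.
Proof.
by rewrite {1}(row_sum_delta u) linear_sum; apply: eq_bigr => i _; rewrite linearZ.
Qed.

Lemma disjoint_supports_other [X i j m] :
  disjoint_supports X -> X i 0 m != 0 -> j != i -> X j 0 m = 0.
Proof.
move=> disjX Xim ji; have /eqP := disjX j i m ji.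
by rewrite mulf_eq0 (negbTE Xim) orbF => /eqP.
Qed.

Lemma disjoint_supports_lincomb_eq0 [X c k m] :
  disjoint_supports X -> \sum_j c j *: X j = 0 -> c k != 0 -> X k 0 m = 0.
Proof.
move=> disjX sum0 ck; apply/eqP; apply: contraT => Xkm.
move/rowP/(_ m): sum0; rewrite summxE mxE (bigD1 k) //= big1 => [|j jk].
  by rewrite addr0 mxE => /eqP; rewrite mulf_eq0 (negbTE ck) (negbTE Xkm).
by rewrite mxE (disjoint_supports_other disjX Xkm jk) mulr0.
Qed.

Lemma disjoint_supports_scaled_perm X :
  disjoint_supports X -> (forall i, X i != 0) ->
  exists (alpha : 'I_n -> F) (pi : 'S_n),
    (forall i, alpha i != 0) /\ (forall i, X i = alpha i *: 'e_(pi i)).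
Proof.
move=> disjX X_neq0.
have /fin_all_exists[p Xp] : forall i, exists m, X i 0 m != 0.
  move=> i; apply/existsP; apply: contraR (X_neq0 i).
  by rewrite negb_exists => /forallP X0; apply/eqP/rowP => m; rewrite mxE; apply/eqP/negPn.
have p_inj : injective p.
  move=> i j pij; apply/eqP; apply: contraT => ij.
  by move: (Xp j); rewrite -pij (disjoint_supports_other disjX (Xp i)) ?eqxx // eq_sym.
pose pi := perm p_inj.
exists (fun i => X i 0 (pi i)), pi; split=> [i|i]; first by rewrite permE.
apply/rowP => m; rewrite !mxE /=; have [->|m_pi] := eqVneq m (pi i).
  by rewrite mulr1.
rewrite mulr0; apply/eqP; apply: contraT => Xim.
move: (Xp ((pi^-1)%g m)); rewrite -(permE p_inj) -/pi permKV.
rewrite (disjoint_supports_other disjX Xim) ?eqxx //.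
by apply: contra_neq m_pi => <-; rewrite permKV.
Qed.

Lemma scaled_perm_linear_bijective f (alpha : 'I_n -> F) (pi : 'S_n) :
  (forall i, alpha i != 0) -> (forall i, f 'e_i = alpha i *: 'e_(pi i)) ->
  bijective f.
Proof.
move=> alpha_neq0 f_e.
have fE : f =1 mulmx^~ (lin1_mx f) by move=> u; rewrite mul_rV_lin1.
have f_mx : lin1_mx f = diag_mx (\row_i alpha i) *m perm_mx pi.
  apply/row_matrixP => i; rewrite row_mul row_diag_mx rowE -fE f_e mxE -scalemxAl.
  by congr (_ *: _); rewrite -rowE; apply/rowP => j; rewrite !mxE eq_sym.
have f_unit : lin1_mx f \in unitmx.
  rewrite f_mx unitmx_mul unitmx_perm andbT unitmxE det_diag unitfE.
  by rewrite prodf_seq_neq0; apply/allP => i _; rewrite mxE alpha_neq0.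
by exists (mulmx^~ (invmx (lin1_mx f))); move=> u; rewrite fE ?mulmxK ?mulmxKV.
Qed.

End DisjointSupports.

Section EvolutionAlgebra.
Variables (R : realType) (n : nat).
Implicit Types (C : 'M[R]_n) (u v : 'rV[R]_n).

Lemma evol_mulE C u v : evol_mul C u v = map2_mx *%R u v *m C.
Proof. by rewrite mulmx_sum_row; apply: eq_bigr => i _; rewrite mxE. Qed.

Lemma evol_mul0l C v : evol_mul C 0 v = 0.
Proof. by rewrite /evol_mul big1 // => i _; rewrite mxE mul0r scale0r. Qed.

Lemma evol_mul_basis C i j :
  evol_mul C (basis_vec R i) (basis_vec R j) = if i == j then row i C else 0.
Proof.
rewrite /evol_mul (bigD1 i) //= big1 => [|k ki]; last first.
  by rewrite !mxE (negbTE ki) mul0r scale0r.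
by rewrite addr0 !mxE !eqxx mul1r; case: eqVneq; rewrite ?scale1r ?scale0r.
Qed.

Lemma evol_mul_eq0 C u v :
  C \in unitmx -> evol_mul C u v = 0 -> forall m, u 0 m * v 0 m = 0.
Proof.
move=> C_unit; rewrite evol_mulE => uvC0 m.
have /rowP/(_ m) : map2_mx *%R u v = 0 by rewrite -(mulmxK C_unit (map2_mx _ u v)) uvC0 mul0mx.
by rewrite !mxE.
Qed.

Section Homomorphism.
Variables (C1 C2 : 'M[R]_n) (f : {linear 'rV[R]_n -> 'rV[R]_n}).
Hypotheses (f_hom : evol_hom C1 C2 f) (C2_unit : C2 \in unitmx).

Lemma evol_hom_basis_disjoint : disjoint_supports (fun i => f (basis_vec R i)).
Proof.
move=> i j m ij; apply: (evol_mul_eq0 C2_unit).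
by rewrite -f_hom evol_mul_basis (negbTE ij) linear0.
Qed.

Lemma evol_hom_basis_sqr i :
  evol_mul C2 (f (basis_vec R i)) (f (basis_vec R i)) = \sum_k C1 i k *: f (basis_vec R k).
Proof.
by rewrite -f_hom evol_mul_basis eqxx linear_rowE; apply: eq_bigr => k _; rewrite mxE.
Qed.

Lemma evol_hom_basis_eq0 i k :
  f (basis_vec R i) = 0 -> C1 i k != 0 -> f (basis_vec R k) = 0.
Proof.
move=> fi0 C1ik; apply/rowP => m; rewrite mxE.
apply: (disjoint_supports_lincomb_eq0 (c := C1 i) evol_hom_basis_disjoint _ C1ik).
by rewrite -evol_hom_basis_sqr fi0 evol_mul0l.
Qed.

End Homomorphism.
End EvolutionAlgebra.

Section RandomWalkToAdjacency.
Variables (R : realType) (n : nat) (e : rel 'I_n).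

Lemma deg_gt0 i k : e i k -> (0 < deg e i)%N.
Proof. by move=> eik; rewrite /deg card_gt0; apply/set0Pn; exists k; rewrite inE. Qed.

Lemma struct_RW_neq0 i k : e i k -> struct_RW R e i k != 0.
Proof.
by move=> eik; rewrite mxE eik mul1r invr_eq0 pnatr_eq0 -lt0n (deg_gt0 eik).
Qed.

Lemma nonsingular_unitmx : nonsingular R e -> struct_A R e \in unitmx.
Proof. by rewrite unitmxE unitfE. Qed.

Lemma evol_hom_RW_A_eq0 (f : {linear 'rV[R]_n -> 'rV[R]_n}) i :
  (forall i j, e i j = e j i) -> connected_graph e -> nonsingular R e ->
  evol_hom (struct_RW R e) (struct_A R e) f ->
  f (basis_vec R i) = 0 -> forall u, f u = 0.
Proof.
move=> e_sym e_conn e_ns f_hom fi0.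
pose Z := [pred j | f (basis_vec R j) == 0].
have propagate j k : e j k -> f (basis_vec R j) = 0 -> f (basis_vec R k) = 0.
  move=> ejk fj0.
  exact (evol_hom_basis_eq0 f_hom (nonsingular_unitmx e_ns) fj0 (struct_RW_neq0 ejk)).
have Z_closed : closed e Z.
  move=> j k ejk /=; apply/eqP/eqP; first exact: propagate.
  by rewrite e_sym in ejk; exact: propagate.
move=> u; rewrite linear_rowE big1 // => j _.
have : j \in Z by rewrite -(closed_connect Z_closed (e_conn i j)) inE fi0.
by rewrite inE => /eqP ->; rewrite scaler0.
Qed.

End RandomWalkToAdjacency.

Theorem proposition2p15 (R : realType) (n : nat) (e : rel 'I_n)
  (f : {linear 'rV[R]_n -> 'rV[R]_n}) :
  simple_graph e -> connected_graph e -> nonsingular R e ->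
  evol_hom (struct_RW R e) (struct_A R e) f ->
  (forall u, f u = 0) \/
  (bijective f /\
   exists (alpha : 'I_n -> R) (pi : 'S_n),
     (forall i, alpha i != 0) /\
     (forall i, f (basis_vec R i) = alpha i *: basis_vec R (pi i))).
Proof.
move=> [e_sym _] e_conn e_ns f_hom.
case: (pickP [pred i | f (basis_vec R i) == 0]) => [i /eqP fi0 | f_neq0].
  by left; apply: evol_hom_RW_A_eq0 e_sym e_conn e_ns f_hom fi0.
right.
have disj := evol_hom_basis_disjoint f_hom (nonsingular_unitmx e_ns).
have [alpha [pi [alpha_neq0 f_e]]] :=
  disjoint_supports_scaled_perm disj (fun i => negbT (f_neq0 i)).
split; last by exists alpha, pi.
exact: scaled_perm_linear_bijective alpha_neq0 f_e.
Qed.
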